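(* Let $\|\cdot\|_C$ be any norm on $\mathbb{R}^N$ and $\|\cdot\|_R$ any norm on $\mathbb{R}^P$, and let $f_D^M$ be defined as in the context. Then for every $X\in\mathbb{R}^{N\times P}$ the limit $f_D^\infty(X)=\lim_{M\to\infty} f_D^M(X)$ exists (and is finite), and the map $X\mapsto f_D^\infty(X)$ is a norm on $\mathbb{R}^{N\times P}$.
   Context: For $M\ge 1$ and $X\in\mathbb{R}^{N\times P}$, define $$f_D^M(X)=\inf\Big\{\tfrac12\sum_{m=1}^M\big(\|u_m\|_C^2+\|v_m\|_R^2\big)\;:\;U=[u_1,\dots,u_M]\in\mathbb{R}^{N\times M},\ V=[v_1,\dots,v_M]\in\mathbb{R}^{P\times M},\ X=UV^\top\Big\},$$ where $u_m$, $v_m$ denote the $m$-th columns of $U$, $V$; if $M<\operatorname{rank}X$ the set is empty and $f_D^M(X)=+\infty$. The limit $f_D^\infty(X)$ is denoted $\|X\|_D$ (the ''decomposition norm''). *)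

From Stdlib Require Import Reals.
Open Scope R_scope.

(* Index set {0,...,n-1}. Vectors in R^n are functions Fin n -> R. *)
Definition Fin (n : nat) : Type := {i : nat | (i < n)%nat}.

Definition is_norm {I : Type} (nrm : (I -> R) -> R) : Prop :=
  (forall v, 0 <= nrm v) /\
  (forall v, nrm v = 0 -> forall i, v i = 0) /\
  (forall (a : R) v, nrm (fun i => a * v i) = Rabs a * nrm v) /\
  (forall u v, nrm (fun i => u i + v i) <= nrm u + nrm v).

Fixpoint sumR (M : nat) (f : nat -> R) : R :=
  match M with
  | O => 0
  | S k => sumR k f + f k
  end.

Definition Mat (N P : nat) : Type := Fin N * Fin P -> R.

(* The set of values (1/2) sum_{m<M} (||u_m||_C^2 + ||v_m||_R^2) over all
   factorizations X = U V^T with M columns; column m of U is (fun i => U i m),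
   only columns m < M are used. *)
Definition decomp_vals (N P : nat) (nC : (Fin N -> R) -> R) (nR : (Fin P -> R) -> R)
    (M : nat) (X : Mat N P) (v : R) : Prop :=
  exists (U : Fin N -> nat -> R) (V : Fin P -> nat -> R),
    (forall i j, X (i, j) = sumR M (fun m => U i m * V j m)) /\
    v = / 2 * sumR M (fun m => (nC (fun i => U i m)) ^ 2 + (nR (fun j => V j m)) ^ 2).

Definition is_inf (S : R -> Prop) (v : R) : Prop :=
  (forall x, S x -> v <= x) /\ (forall b, (forall x, S x -> b <= x) -> b <= v).

(* f_D^M(X) is finite and equal to v: the feasible set is nonempty and v is its infimum.
   (When the feasible set is empty, f_D^M(X) = +infinity and no real v satisfies this.) *)
Definition fDM_is (N P : nat) nC nR (M : nat) (X : Mat N P) (v : R) : Prop :=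
  (exists x, decomp_vals N P nC nR M X x) /\ is_inf (decomp_vals N P nC nR M X) v.

Definition fD_tends_to (N P : nat) nC nR (X : Mat N P) (L : R) : Prop :=
  forall eps, eps > 0 -> exists M0 : nat, forall M : nat, (M0 <= M)%nat ->
    exists v, fDM_is N P nC nR M X v /\ Rabs (v - L) < eps.

(* By AM-GM and rescaling u_m, v_m in opposite directions, f_D^M(X)
   equals the infimum of the product costs sum_m ||u_m||_C ||v_m||_R.  Padding
   with zero columns shows that these costs only grow as a set with M, so
   f_D^M(X) decreases to dnorm X, the infimum of product costs over all M.
   Concatenating factorizations gives the triangle inequality and scaling a
   factor gives homogeneity.  Definiteness needs that every norm on R^N
   controls each coordinate, |u_i| <= K ||u||; this is proved by induction on
   the number of coordinates in use, via a Cauchy-sequence argument showing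
   that each basis vector stays at positive distance from the span of the
   previous ones. *)

From Stdlib Require Import Arith Lia Reals Lra Psatz Classical ClassicalEpsilon
  FunctionalExtensionality ProofIrrelevance.
Open Scope R_scope.

Section NormBasics.
Context {I : Type} (nrm : (I -> R) -> R).

Lemma norm_ext (u v : I -> R) : (forall i, u i = v i) -> nrm u = nrm v.
Proof. intros H. f_equal. apply functional_extensionality; exact H. Qed.

Hypothesis Hn : is_norm nrm.

Lemma norm_zero : nrm (fun _ => 0) = 0.
Proof.
  destruct Hn as (_ & _ & Hhom & _).
  rewrite (norm_ext _ (fun i => 0 * (fun _ : I => 0) i)) by (intros; ring).
  rewrite Hhom, Rabs_R0; ring.
Qed.

Lemma norm_add_scaled (a : R) (u v : I -> R) :
  nrm (fun i => u i + a * v i) <= nrm u + Rabs a * nrm v.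
Proof.
  destruct Hn as (_ & _ & Hhom & Htri).
  rewrite <- Hhom. apply (Htri u (fun i => a * v i)).
Qed.

Lemma norm_sub (u v : I -> R) : nrm (fun i => u i - v i) <= nrm u + nrm v.
Proof.
  rewrite (norm_ext _ (fun i => u i + (-1) * v i)) by (intros; ring).
  replace (nrm v) with (Rabs (-1) * nrm v) by (rewrite Rabs_left by lra; ring).
  apply norm_add_scaled.
Qed.

End NormBasics.

Lemma sumR_ext_lt (M : nat) (f g : nat -> R) :
  (forall m, (m < M)%nat -> f m = g m) -> sumR M f = sumR M g.
Proof.
  induction M as [|M IH]; simpl; intros H; auto.
  rewrite IH by (intros; apply H; lia). rewrite H by lia. reflexivity.
Qed.

Lemma sumR_ext (M : nat) (f g : nat -> R) : (forall m, f m = g m) -> sumR M f = sumR M g.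
Proof. intros H; apply sumR_ext_lt; auto. Qed.

Lemma sumR_le (M : nat) (f g : nat -> R) :
  (forall m, (m < M)%nat -> f m <= g m) -> sumR M f <= sumR M g.
Proof.
  induction M as [|M IH]; simpl; intros H; [lra|].
  pose proof (H M (Nat.lt_succ_diag_r M)).
  pose proof (IH ltac:(intros; apply H; lia)). lra.
Qed.

Lemma sumR_zero (M : nat) : sumR M (fun _ => 0) = 0.
Proof. induction M as [|M IH]; simpl; [|rewrite IH]; ring. Qed.

Lemma sumR_nonneg (M : nat) (f : nat -> R) : (forall m, (m < M)%nat -> 0 <= f m) -> 0 <= sumR M f.
Proof. intros H. rewrite <- (sumR_zero M). apply sumR_le; auto. Qed.

Lemma sumR_scal (M : nat) (a : R) (f : nat -> R) : sumR M (fun m => a * f m) = a * sumR M f.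
Proof. induction M as [|M IH]; simpl; [|rewrite IH]; ring. Qed.

Lemma sumR_abs (M : nat) (f : nat -> R) : Rabs (sumR M f) <= sumR M (fun m => Rabs (f m)).
Proof.
  induction M as [|M IH]; simpl; [rewrite Rabs_R0; lra|].
  eapply Rle_trans; [apply Rabs_triang | lra].
Qed.

Lemma sumR_split (M1 M2 : nat) (f : nat -> R) :
  sumR (M1 + M2) f = sumR M1 f + sumR M2 (fun m => f (M1 + m)%nat).
Proof.
  induction M2 as [|M2 IH]; simpl; [rewrite Nat.add_0_r; ring|].
  rewrite Nat.add_succ_r; simpl; rewrite IH; ring.
Qed.

Lemma sumR_pad (M M' : nat) (f : nat -> R) : (M <= M')%nat ->
  sumR M' (fun m => if lt_dec m M then f m else 0) = sumR M f.
Proof.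
  intros HM. replace M' with (M + (M' - M))%nat by lia. rewrite sumR_split.
  rewrite (sumR_ext_lt M _ f) by (intros m Hm; destruct (lt_dec m M); [auto|lia]).
  rewrite (sumR_ext (M' - M) _ (fun _ => 0)) by (intros m; destruct (lt_dec (M + m) M); [lia|auto]).
  rewrite sumR_zero; ring.
Qed.

Lemma Rabs_nonpos_eq_0 (x : R) : Rabs x <= 0 -> x = 0.
Proof.
  intros H. destruct (Req_dec x 0) as [|Hx]; [assumption|].
  pose proof (Rabs_pos_lt x Hx); lra.
Qed.

Lemma inv_succ_pos (n : nat) : 0 < / (INR n + 1).
Proof. apply Rinv_0_lt_compat. pose proof (pos_INR n); lra. Qed.

Lemma inv_succ_antimono (n m : nat) : (n <= m)%nat -> / (INR m + 1) <= / (INR n + 1).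
Proof.
  intros Hnm. apply Rinv_le_contravar; [pose proof (pos_INR n); lra|].
  apply le_INR in Hnm; lra.
Qed.

Lemma inv_succ_small (x : R) : 0 < x -> exists n : nat, / (INR n + 1) < x.
Proof.
  intros Hx. destruct (archimed_cor1 x Hx) as [n [Hn Hn0]]. exists n.
  apply Rle_lt_trans with (/ INR n); auto.
  apply Rinv_le_contravar; [apply lt_0_INR; lia | lra].
Qed.

Lemma le_inv_succ_nonpos (x K : R) : (forall n : nat, x <= K * / (INR n + 1)) -> x <= 0.
Proof.
  intros H. apply Rnot_lt_le; intro Hx.
  assert (HK : 0 < K) by (specialize (H 0%nat); simpl in H; rewrite Rplus_0_l, Rinv_1 in H; lra).
  destruct (inv_succ_small (x / K)) as [n Hn]; [apply Rdiv_lt_0_compat; lra|].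
  specialize (H n).
  assert (K * / (INR n + 1) < K * (x / K)) by (apply Rmult_lt_compat_l; lra).
  replace (K * (x / K)) with x in * by (field; lra). lra.
Qed.

Lemma limit_dist_le (u : nat -> R) (l a b : R) (n : nat) : Un_cv u l ->
  (forall m, (n <= m)%nat -> Rabs (u m - a) <= b) -> Rabs (l - a) <= b.
Proof.
  intros Hl Hb. apply Rnot_lt_le; intro Hc.
  destruct (Hl (Rabs (l - a) - b)) as [M HM]; [lra|].
  specialize (HM (max n M) (Nat.le_max_r _ _)). specialize (Hb (max n M) (Nat.le_max_l _ _)).
  unfold R_dist in HM. rewrite Rabs_minus_sym in HM.
  pose proof (Rabs_triang (l - u (max n M)) (u (max n M) - a)) as Htri.
  replace (l - u (max n M) + (u (max n M) - a)) with (l - a) in Htri by ring.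
  lra.
Qed.

Lemma fast_cauchy_limit (a : nat -> R) (K : R) :
  (forall n m, (n <= m)%nat -> Rabs (a m - a n) <= K * / (INR n + 1)) ->
  exists l, forall n, Rabs (l - a n) <= K * / (INR n + 1).
Proof.
  intros Ha.
  assert (HK : 0 <= K).
  { specialize (Ha 0%nat 0%nat (le_n _)). simpl in Ha.
    rewrite Rminus_diag, Rabs_R0, Rplus_0_l, Rinv_1, Rmult_1_r in Ha; exact Ha. }
  assert (Hcau : Cauchy_crit a).
  { intros eps Heps.
    destruct (inv_succ_small (eps / (K + 1))) as [n0 Hn0]; [apply Rdiv_lt_0_compat; lra|].
    assert (Hsmall : K * / (INR n0 + 1) < eps).
    { apply Rle_lt_trans with ((K + 1) * / (INR n0 + 1)).
      - pose proof (inv_succ_pos n0); nra.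
      - replace eps with ((K + 1) * (eps / (K + 1))) by (field; lra).
        apply Rmult_lt_compat_l; lra. }
    exists n0. intros n m Hn Hm. unfold R_dist.
    assert (Htail : forall p q, (n0 <= p)%nat -> (p <= q)%nat -> Rabs (a q - a p) < eps).
    { intros p q Hp Hpq. eapply Rle_lt_trans; [apply Ha; exact Hpq|].
      pose proof (inv_succ_antimono n0 p Hp). nra. }
    destruct (le_ge_dec n m).
    - rewrite Rabs_minus_sym. apply Htail; auto.
    - apply Htail; auto. }
  destruct (R_complete a Hcau) as [l Hl]. exists l. intros n.
  apply (limit_dist_le a l (a n) _ n Hl). intros m Hm. apply Ha; exact Hm.
Qed.

(* Every norm is bounded above by a multiple of the sup-norm
   (triangle inequality in the standard basis) and below by a multiple of each
   coordinate; the lower bound is the finite-dimensional content of the proof. *)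
Section FiniteDim.
Context (N : nat) (nC : (Fin N -> R) -> R) (Hn : is_norm nC).

(* k-th standard basis vector (zero when k >= N), k-th coordinate (zero when
   k >= N), and truncation to the first k coordinates. *)
Definition ebas (k : nat) : Fin N -> R :=
  fun i => if Nat.eq_dec (proj1_sig i) k then 1 else 0.
Definition coef (u : Fin N -> R) (k : nat) : R :=
  match lt_dec k N with left H => u (exist _ k H) | right _ => 0 end.
Definition trunc (k : nat) (u : Fin N -> R) : Fin N -> R :=
  fun i => if lt_dec (proj1_sig i) k then u i else 0.
Definition supp_lt (k : nat) (u : Fin N -> R) : Prop :=
  forall i : Fin N, (k <= proj1_sig i)%nat -> u i = 0.

Lemma coef_spec (u : Fin N -> R) (i : Fin N) : coef u (proj1_sig i) = u i.
Proof.
  destruct i as [j Hj]; unfold coef; simpl.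
  destruct (lt_dec j N) as [H|]; [|lia]. rewrite (proof_irrelevance _ H Hj); reflexivity.
Qed.

Lemma trunc_succ (k : nat) (u : Fin N -> R) (i : Fin N) :
  trunc (S k) u i = trunc k u i + coef u k * ebas k i.
Proof.
  unfold trunc, ebas. rewrite <- (coef_spec u i).
  destruct (Nat.eq_dec (proj1_sig i) k) as [Heq|Hne].
  - rewrite Heq. destruct (lt_dec k (S k)), (lt_dec k k); try lia; ring.
  - destruct (lt_dec (proj1_sig i) (S k)), (lt_dec (proj1_sig i) k); try lia; ring.
Qed.

Definition basis_norm_sum : R := sumR N (fun m => nC (ebas m)).

Lemma norm_le_sup (u : Fin N -> R) (Bd : R) : 0 <= Bd ->
  (forall i, Rabs (u i) <= Bd) -> nC u <= Bd * basis_norm_sum.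
Proof.
  intros HBd Hu.
  assert (Htrunc : forall k, nC (trunc k u) <= Bd * sumR k (fun m => nC (ebas m))).
  { induction k as [|k IH]; simpl.
    - rewrite (norm_ext nC _ (fun _ => 0)), (norm_zero nC Hn) by
        (intros i; unfold trunc; destruct (lt_dec _ 0); [lia|reflexivity]).
      lra.
    - rewrite (norm_ext nC _ (fun i => trunc k u i + coef u k * ebas k i)) by apply trunc_succ.
      eapply Rle_trans; [apply (norm_add_scaled nC Hn)|].
      assert (Rabs (coef u k) <= Bd).
      { unfold coef. destruct (lt_dec k N); [auto | rewrite Rabs_R0; lra]. }
      pose proof (proj1 Hn (ebas k)). nra. }
  rewrite (norm_ext nC u (trunc N u)); [apply Htrunc|].
  intros i; unfold trunc. destruct (lt_dec (proj1_sig i) N); [reflexivity|].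
  destruct i; simpl in *; lia.
Qed.

Lemma norm_vanish_of_approx (w : Fin N -> R) (W : nat -> Fin N -> R) (L K : R) :
  0 <= K -> (forall n, nC (W n) <= L * / (INR n + 1)) ->
  (forall n i, Rabs (w i - W n i) <= K * / (INR n + 1)) -> nC w = 0.
Proof.
  intros HK HW Hw. apply Rle_antisym; [|apply Hn].
  apply (le_inv_succ_nonpos _ (L + K * basis_norm_sum)). intros n.
  rewrite (norm_ext nC w (fun i => W n i + 1 * (w i - W n i))) by (intros; ring).
  eapply Rle_trans; [apply (norm_add_scaled nC Hn)|]. rewrite Rabs_R1.
  pose proof (inv_succ_pos n).
  pose proof (norm_le_sup (fun i => w i - W n i) (K * / (INR n + 1))
    ltac:(apply Rmult_le_pos; lra) (Hw n)).
  pose proof (HW n). nra.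
Qed.

Definition coord_bounded (k : nat) (K : R) : Prop :=
  forall u, supp_lt k u -> forall i, Rabs (u i) <= K * nC u.

(* If coordinates below k are controlled, the k-th basis vector keeps a
   positive distance from the span of the previous ones: otherwise a sequence
   of approximants would be Cauchy and its limit w would give w + e_k = 0. *)
Lemma basis_vector_far (k : nat) (K : R) : (k < N)%nat -> 0 <= K -> coord_bounded k K ->
  exists d, 0 < d /\ forall w, supp_lt k w -> d <= nC (fun i => w i + ebas k i).
Proof.
  intros Hk HK Hbnd. apply NNPP; intro Hfar.
  assert (Hclose : forall n : nat, exists w,
             supp_lt k w /\ nC (fun i => w i + ebas k i) < / (INR n + 1)).
  { intros n. apply NNPP; intro Hno. apply Hfar.
    exists (/ (INR n + 1)). split; [apply inv_succ_pos|].
    intros w Hw. apply Rnot_lt_le; intro Hlt. apply Hno. exists w; auto. }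
  destruct (choice _ Hclose) as [W HW].
  assert (Hosc : forall n m i, (n <= m)%nat ->
             Rabs (W m i - W n i) <= (2 * K) * / (INR n + 1)).
  { intros n m i Hnm.
    assert (Hsupp : supp_lt k (fun i => W m i - W n i)).
    { intros j Hj. rewrite (proj1 (HW m) j Hj), (proj1 (HW n) j Hj); ring. }
    assert (Hdiff : nC (fun i => W m i - W n i)
                    <= nC (fun i => W m i + ebas k i) + nC (fun i => W n i + ebas k i)).
    { rewrite (norm_ext nC _ (fun i => (W m i + ebas k i) - (W n i + ebas k i))) by (intros; ring).
      apply (norm_sub nC Hn). }
    pose proof (Hbnd _ Hsupp i). pose proof (proj2 (HW m)). pose proof (proj2 (HW n)).
    pose proof (inv_succ_antimono n m Hnm). nra. }
  destruct (choice _ (fun i => fast_cauchy_limit (fun n => W n i) _ (fun n m => Hosc n m i)))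
    as [w Hw].
  assert (Hzero : nC (fun i => w i + ebas k i) = 0).
  { apply (norm_vanish_of_approx _ (fun n i => W n i + ebas k i) 1 (2 * K)); [lra| |].
    - intros n. pose proof (proj2 (HW n)). lra.
    - intros n i. replace (w i + ebas k i - (W n i + ebas k i)) with (w i - W n i) by ring.
      apply Hw. }
  set (ik := exist (fun j => (j < N)%nat) k Hk).
  assert (Hwk : w ik = 0).
  { apply Rabs_nonpos_eq_0, (le_inv_succ_nonpos _ (2 * K)). intros n.
    rewrite <- (Rminus_0_r (w ik)), <- (proj1 (HW n) ik (le_n k)). apply Hw. }
  pose proof (proj1 (proj2 Hn) _ Hzero ik) as Hsum.
  cbv beta in Hsum. rewrite Hwk in Hsum. unfold ebas in Hsum; simpl in Hsum.
  destruct (Nat.eq_dec k k); [lra | lia].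
Qed.

Lemma coord_bounded_succ (k : nat) (K : R) : (k < N)%nat -> 0 <= K -> coord_bounded k K ->
  exists K', 0 <= K' /\ coord_bounded (S k) K'.
Proof.
  intros Hk HK Hbnd.
  destruct (basis_vector_far k K Hk HK Hbnd) as [d [Hd Hfar]].
  set (E := nC (ebas k)). assert (HE : 0 <= E) by apply Hn.
  exists (/ d + K * (1 + E / d)).
  assert (Hd' : 0 < / d) by (apply Rinv_0_lt_compat; lra).
  assert (HEd : 0 <= E / d) by (unfold Rdiv; apply Rmult_le_pos; lra).
  assert (HKE : 0 <= K * (1 + E / d)) by nra.
  split; [lra|].
  intros u Hu i.
  set (a := coef u k). set (w := fun i => u i + (- a) * ebas k i).
  assert (Hws : supp_lt k w).
  { intros j Hj. unfold w, ebas. destruct (Nat.eq_dec (proj1_sig j) k) as [Hjk|].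
    - unfold a. rewrite <- Hjk, coef_spec. ring.
    - rewrite (Hu j) by lia. ring. }
  assert (Hu0 : 0 <= nC u) by apply Hn.
  (* the k-th coordinate is controlled by the distance d *)
  assert (Ha : Rabs a <= / d * nC u).
  { destruct (Req_dec a 0) as [Ha0|Ha0]; [rewrite Ha0, Rabs_R0; nra|].
    assert (Hsc : supp_lt k (fun i => / a * w i)) by (intros j Hj; rewrite (Hws j Hj); ring).
    pose proof (Hfar _ Hsc) as Hda.
    rewrite (norm_ext nC u (fun i => a * (/ a * w i + ebas k i))) in Hu0 |- *
      by (intros; unfold w; field; exact Ha0).
    rewrite (proj1 (proj2 (proj2 Hn))) in Hu0 |- *.
    apply Rmult_le_reg_l with d; [lra|]. rewrite <- Rmult_assoc, Rinv_r by lra.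
    pose proof (Rabs_pos a). nra. }
  assert (Hw : nC w <= (1 + E / d) * nC u).
  { eapply Rle_trans; [apply (norm_add_scaled nC Hn)|]. rewrite Rabs_Ropp.
    fold E. replace ((1 + E / d) * nC u) with (nC u + E * (/ d * nC u)) by (field; lra).
    pose proof (Rabs_pos a). nra. }
  destruct (lt_eq_lt_dec (proj1_sig i) k) as [[Hlt|Heq]|Hgt].
  - replace (u i) with (w i) by (unfold w, ebas; destruct (Nat.eq_dec _ k); [lia|ring]).
    pose proof (Hbnd w Hws i). assert (0 <= / d * nC u) by nra. nra.
  - rewrite <- coef_spec, Heq. fold a.
    assert (0 <= K * (1 + E / d) * nC u) by (apply Rmult_le_pos; assumption). lra.
  - rewrite (Hu i) by lia. rewrite Rabs_R0. apply Rmult_le_pos; lra.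
Qed.

Lemma coord_bound : exists K, 0 <= K /\ forall u i, Rabs (u i) <= K * nC u.
Proof.
  assert (Hall : forall k, (k <= N)%nat -> exists K, 0 <= K /\ coord_bounded k K).
  { induction k as [|k IH]; intros Hk.
    - exists 0. split; [lra|]. intros u Hu i.
      rewrite (Hu i (Nat.le_0_l _)), Rabs_R0; lra.
    - destruct IH as [K [HK Hb]]; [lia|]. apply (coord_bounded_succ k K); auto. }
  destruct (Hall N (le_n N)) as [K [HK Hb]]. exists K. split; auto.
  intros u i. apply Hb. intros [j Hj] Hj'; simpl in Hj'; lia.
Qed.

End FiniteDim.

Lemma inf_exists (S : R -> Prop) : (exists x, S x) -> (forall x, S x -> 0 <= x) ->
  exists v, is_inf S v.
Proof.
  intros [x0 Hx0] Hpos.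
  destruct (completeness (fun y => S (- y))) as [m [Hub Hlub]].
  - exists 0. intros y Hy. apply Hpos in Hy. lra.
  - exists (- x0). rewrite Ropp_involutive. exact Hx0.
  - exists (- m). split.
    + intros x Hx. assert (- x <= m) by (apply Hub; rewrite Ropp_involutive; exact Hx). lra.
    + intros b Hb. assert (m <= - b) by (apply Hlub; intros y Hy; apply Hb in Hy; lra). lra.
Qed.

Lemma inf_approx (S : R -> Prop) (v eps : R) : is_inf S v -> 0 < eps ->
  exists x, S x /\ x < v + eps.
Proof.
  intros [_ Hglb] Heps. apply NNPP; intro Hno.
  assert (v + eps <= v); [|lra].
  apply Hglb. intros x Hx. apply Rnot_lt_le. intro. apply Hno. exists x; auto.
Qed.

Lemma inf_le_of_approx (S : R -> Prop) (v w : R) : is_inf S v ->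
  (forall eps, 0 < eps -> exists x, S x /\ x <= w + eps) -> v <= w.
Proof.
  intros [Hlb _] H. apply Rnot_lt_le; intro Hc.
  destruct (H ((v - w) / 2)) as [x [Hx Hxw]]; [lra|]. apply Hlb in Hx. lra.
Qed.

Section Decomposition.
Context (N P : nat) (nC : (Fin N -> R) -> R) (nR : (Fin P -> R) -> R)
  (HC : is_norm nC) (HR : is_norm nR).

Definition prod_cost_vals (M : nat) (X : Mat N P) (t : R) : Prop :=
  exists (U : Fin N -> nat -> R) (V : Fin P -> nat -> R),
    (forall i j, X (i, j) = sumR M (fun m => U i m * V j m)) /\
    t = sumR M (fun m => nC (fun i => U i m) * nR (fun j => V j m)).

Definition any_prod_cost (X : Mat N P) (t : R) : Prop := exists M, prod_cost_vals M X t.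

Lemma prod_cost_nonneg (M : nat) (X : Mat N P) (t : R) : prod_cost_vals M X t -> 0 <= t.
Proof.
  intros (U & V & _ & ->). apply sumR_nonneg. intros m _.
  apply Rmult_le_pos; [apply HC | apply HR].
Qed.

Lemma prod_cost_pad (M M' : nat) (X : Mat N P) (t : R) :
  (M <= M')%nat -> prod_cost_vals M X t -> prod_cost_vals M' X t.
Proof.
  intros HM (U & V & HX & Ht).
  exists (fun i m => if lt_dec m M then U i m else 0),
         (fun j m => if lt_dec m M then V j m else 0).
  split.
  - intros i j. rewrite HX, <- (sumR_pad M M') by exact HM.
    apply sumR_ext. intros m. destruct (lt_dec m M); [reflexivity | ring].
  - rewrite Ht, <- (sumR_pad M M') by exact HM.
    apply sumR_ext. intros m. destruct (lt_dec m M); [reflexivity|].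
    rewrite (norm_zero nC HC); ring.
Qed.

(* The trivial factorization X = X I uses P columns. *)
Lemma prod_cost_exists (X : Mat N P) : exists t, prod_cost_vals P X t.
Proof.
  set (U := fun i m => match lt_dec m P with left H => X (i, exist _ m H) | right _ => 0 end).
  set (V := fun (j : Fin P) m => if Nat.eq_dec m (proj1_sig j) then 1 else 0).
  exists (sumR P (fun m => nC (fun i => U i m) * nR (fun j => V j m))), U, V.
  split; [|reflexivity].
  intros i [j Hj].
  assert (Hpartial : forall M, sumR M (fun m => U i m * V (exist _ j Hj) m)
                               = if lt_dec j M then X (i, exist _ j Hj) else 0).
  { induction M as [|M IH]; simpl; [destruct (lt_dec j 0); [lia | reflexivity]|].
    rewrite IH. unfold V; simpl. destruct (Nat.eq_dec M j) as [<-|].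
    - unfold U. destruct (lt_dec M M), (lt_dec M (S M)), (lt_dec M P) as [H|]; try lia.
      rewrite (proof_irrelevance _ H Hj). ring.
    - destruct (lt_dec j M), (lt_dec j (S M)); try lia; ring. }
  rewrite Hpartial. destruct (lt_dec j P); [reflexivity | lia].
Qed.

Lemma prod_cost_add (M1 M2 : nat) (X Y : Mat N P) (t1 t2 : R) :
  prod_cost_vals M1 X t1 -> prod_cost_vals M2 Y t2 ->
  prod_cost_vals (M1 + M2) (fun ij => X ij + Y ij) (t1 + t2).
Proof.
  intros (U1 & V1 & HX & Ht1) (U2 & V2 & HY & Ht2).
  set (glue := fun {A : Type} (f g : A -> nat -> R) a m =>
                 if lt_dec m M1 then f a m else g a (m - M1)%nat).
  exists (glue _ U1 U2), (glue _ V1 V2). unfold glue. split.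
  - intros i j. rewrite HX, HY, sumR_split. f_equal.
    + apply sumR_ext_lt. intros m Hm. destruct (lt_dec m M1); [reflexivity | lia].
    + apply sumR_ext. intros m. destruct (lt_dec (M1 + m) M1); [lia|].
      replace (M1 + m - M1)%nat with m by lia. reflexivity.
  - rewrite Ht1, Ht2, sumR_split. f_equal.
    + apply sumR_ext_lt. intros m Hm. destruct (lt_dec m M1); [reflexivity | lia].
    + apply sumR_ext. intros m. destruct (lt_dec (M1 + m) M1); [lia|].
      replace (M1 + m - M1)%nat with m by lia. reflexivity.
Qed.

Lemma prod_cost_scale (M : nat) (X : Mat N P) (t a : R) :
  prod_cost_vals M X t -> prod_cost_vals M (fun ij => a * X ij) (Rabs a * t).
Proof.
  intros (U & V & HX & Ht). exists (fun i m => a * U i m), V. split.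
  - intros i j. rewrite HX, <- sumR_scal. apply sumR_ext; intros; ring.
  - rewrite Ht, <- sumR_scal. apply sumR_ext; intros m.
    rewrite (proj1 (proj2 (proj2 HC))). ring.
Qed.

Lemma prod_cost_entry_bound (KC KR : R) : 0 <= KC -> 0 <= KR ->
  (forall u i, Rabs (u i) <= KC * nC u) -> (forall v j, Rabs (v j) <= KR * nR v) ->
  forall M X t, prod_cost_vals M X t -> forall i j, Rabs (X (i, j)) <= KC * KR * t.
Proof.
  intros HKC HKR HbC HbR M X t (U & V & HX & Ht) i j. rewrite HX, Ht.
  eapply Rle_trans; [apply sumR_abs|].
  rewrite <- sumR_scal. apply sumR_le. intros m _. rewrite Rabs_mult.
  pose proof (HbC (fun i => U i m) i). pose proof (HbR (fun j => V j m) j).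
  pose proof (Rabs_pos (U i m)). pose proof (Rabs_pos (V j m)).
  replace (KC * KR * (nC (fun i => U i m) * nR (fun j => V j m)))
    with ((KC * nC (fun i => U i m)) * (KR * nR (fun j => V j m))) by ring.
  apply Rmult_le_compat; assumption.
Qed.

(* AM-GM: each value of f_D^M(X) dominates some product cost. *)
Lemma decomp_ge_prod_cost (M : nat) (X : Mat N P) (x : R) :
  decomp_vals N P nC nR M X x -> exists t, prod_cost_vals M X t /\ t <= x.
Proof.
  intros (U & V & HX & Hx).
  exists (sumR M (fun m => nC (fun i => U i m) * nR (fun j => V j m))).
  split; [exists U, V; auto|].
  rewrite Hx, <- sumR_scal. apply sumR_le. intros m _.
  pose proof (pow2_ge_0 (nC (fun i => U i m) - nR (fun j => V j m))). simpl in *. lra.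
Qed.

(* Equality case of AM-GM: a rank-one term u v^T can be rebalanced so that
   (||u'||^2 + ||v'||^2)/2 = ||u|| ||v||. *)
Lemma balance_column (u : Fin N -> R) (v : Fin P -> R) :
  exists u' v', (forall i j, u' i * v' j = u i * v j) /\
    / 2 * (nC u' ^ 2 + nR v' ^ 2) = nC u * nR v.
Proof.
  destruct HC as (HCpos & HCdef & HChom & _). destruct HR as (HRpos & HRdef & HRhom & _).
  pose proof (HCpos u) as Ha. pose proof (HRpos v) as Hb.
  destruct (Req_dec (nC u) 0) as [Ha0|Ha0]; [|destruct (Req_dec (nR v) 0) as [Hb0|Hb0]].
  - exists (fun _ => 0), (fun _ => 0). split.
    + intros i j. rewrite (HCdef u Ha0 i). ring.
    + rewrite Ha0, (norm_zero nC HC), (norm_zero nR HR). ring.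
  - exists (fun _ => 0), (fun _ => 0). split.
    + intros i j. rewrite (HRdef v Hb0 j). ring.
    + rewrite Hb0, (norm_zero nC HC), (norm_zero nR HR). ring.
  - set (s := sqrt (nR v / nC u)).
    assert (Hq : 0 < nR v / nC u) by (apply Rdiv_lt_0_compat; lra).
    assert (Hs : 0 < s) by (apply sqrt_lt_R0; exact Hq).
    assert (Hss : s * s = nR v / nC u) by (apply sqrt_sqrt; lra).
    exists (fun i => s * u i), (fun j => / s * v j). split.
    + intros i j. field. lra.
    + rewrite HChom, HRhom, (Rabs_pos_eq s), Rabs_pos_eq by (try apply Rlt_le, Rinv_0_lt_compat; lra).
      replace (/ 2 * ((s * nC u) ^ 2 + (/ s * nR v) ^ 2))
        with (/ 2 * ((s * s) * nC u ^ 2 + nR v ^ 2 / (s * s))) by (field; lra).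
      rewrite Hss. field. lra.
Qed.

Lemma prod_cost_in_decomp (M : nat) (X : Mat N P) (t : R) :
  prod_cost_vals M X t -> decomp_vals N P nC nR M X t.
Proof.
  intros (U & V & HX & Ht).
  assert (Hbal : forall m, exists uv : (Fin N -> R) * (Fin P -> R),
             (forall i j, fst uv i * snd uv j = U i m * V j m) /\
             / 2 * (nC (fst uv) ^ 2 + nR (snd uv) ^ 2)
             = nC (fun i => U i m) * nR (fun j => V j m)).
  { intros m. destruct (balance_column (fun i => U i m) (fun j => V j m)) as (u' & v' & H).
    exists (u', v'). exact H. }
  destruct (choice _ Hbal) as [uv Huv].
  exists (fun i m => fst (uv m) i), (fun j m => snd (uv m) j). split.
  - intros i j. rewrite HX. apply sumR_ext. intros m. symmetry. apply Huv.
  - rewrite Ht, <- sumR_scal. apply sumR_ext. intros m. symmetry. apply Huv.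
Qed.

Definition dnorm (X : Mat N P) : R := epsilon (inhabits 0) (is_inf (any_prod_cost X)).

Lemma dnorm_is_inf (X : Mat N P) : is_inf (any_prod_cost X) (dnorm X).
Proof.
  unfold dnorm. apply epsilon_spec, inf_exists.
  - destruct (prod_cost_exists X) as [t Ht]. exists t, P. exact Ht.
  - intros t [M Ht]. exact (prod_cost_nonneg M X t Ht).
Qed.

Lemma fDM_between (M : nat) (X : Mat N P) (t : R) : prod_cost_vals M X t ->
  exists v, fDM_is N P nC nR M X v /\ dnorm X <= v <= t.
Proof.
  intros Ht.
  assert (Hne : exists x, decomp_vals N P nC nR M X x) by (exists t; apply prod_cost_in_decomp, Ht).
  destruct (inf_exists _ Hne) as [v Hv].
  { intros x Hx. destruct (decomp_ge_prod_cost M X x Hx) as [t' [Ht' Hle]].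
    pose proof (prod_cost_nonneg M X t' Ht'). lra. }
  exists v. split; [split; assumption|]. split.
  - apply (proj2 Hv). intros x Hx. destruct (decomp_ge_prod_cost M X x Hx) as [t' [Ht' Hle]].
    pose proof (proj1 (dnorm_is_inf X) t' (ex_intro _ M Ht')). lra.
  - apply (proj1 Hv), prod_cost_in_decomp, Ht.
Qed.

(* f_D^M(X) converges to dnorm X: pick a factorization of cost within eps of
   dnorm X and pad it to any larger number of columns. *)
Lemma dnorm_limit (X : Mat N P) : fD_tends_to N P nC nR X (dnorm X).
Proof.
  intros eps Heps.
  destruct (inf_approx _ _ eps (dnorm_is_inf X) Heps) as [t [[M1 Ht] Hlt]].
  exists M1. intros M HM.
  destruct (fDM_between M X t (prod_cost_pad M1 M X t HM Ht)) as [v [Hv Hbetween]].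
  exists v. split; [exact Hv|]. rewrite Rabs_pos_eq; lra.
Qed.

Lemma dnorm_nonneg (X : Mat N P) : 0 <= dnorm X.
Proof. apply (proj2 (dnorm_is_inf X)). intros t [M Ht]. exact (prod_cost_nonneg M X t Ht). Qed.

Lemma dnorm_scale_le (a : R) (X : Mat N P) : dnorm (fun ij => a * X ij) <= Rabs a * dnorm X.
Proof.
  destruct (Req_dec a 0) as [->|Ha].
  - rewrite Rabs_R0, Rmult_0_l. apply (proj1 (dnorm_is_inf _)). exists 0%nat.
    exists (fun _ _ => 0), (fun _ _ => 0). split; [intros; simpl; ring | reflexivity].
  - pose proof (Rabs_pos_lt a Ha) as Ha'.
    apply (inf_le_of_approx _ _ _ (dnorm_is_inf _)). intros eps Heps.
    destruct (inf_approx _ _ (eps / Rabs a) (dnorm_is_inf X)) as [t [[M Ht] Hlt]];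
      [apply Rdiv_lt_0_compat; assumption|].
    exists (Rabs a * t). split; [exists M; apply prod_cost_scale, Ht|].
    replace (Rabs a * dnorm X + eps) with (Rabs a * (dnorm X + eps / Rabs a)) by (field; lra).
    apply Rmult_le_compat_l; lra.
Qed.

Lemma dnorm_homog (a : R) (X : Mat N P) : dnorm (fun ij => a * X ij) = Rabs a * dnorm X.
Proof.
  apply Rle_antisym; [apply dnorm_scale_le|].
  destruct (Req_dec a 0) as [->|Ha]; [rewrite Rabs_R0, Rmult_0_l; apply dnorm_nonneg|].
  pose proof (dnorm_scale_le (/ a) (fun ij => a * X ij)) as Hinv.
  assert (HX : (fun ij => / a * (a * X ij)) = X)
    by (apply functional_extensionality; intros; field; exact Ha).
  cbv beta in Hinv. rewrite HX in Hinv.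
  rewrite Rabs_inv in Hinv. pose proof (Rabs_pos_lt a Ha).
  apply Rmult_le_compat_l with (r := Rabs a) in Hinv; [|lra].
  rewrite <- Rmult_assoc, Rinv_r, Rmult_1_l in Hinv; lra.
Qed.

Lemma dnorm_triangle (X Y : Mat N P) : dnorm (fun ij => X ij + Y ij) <= dnorm X + dnorm Y.
Proof.
  apply (inf_le_of_approx _ _ _ (dnorm_is_inf _)). intros eps Heps.
  destruct (inf_approx _ _ (eps / 2) (dnorm_is_inf X)) as [t1 [[M1 Ht1] Hlt1]]; [lra|].
  destruct (inf_approx _ _ (eps / 2) (dnorm_is_inf Y)) as [t2 [[M2 Ht2] Hlt2]]; [lra|].
  exists (t1 + t2). split; [exists (M1 + M2)%nat; apply prod_cost_add; assumption | lra].
Qed.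

(* Definiteness uses the coordinate bounds for both norms. *)
Lemma dnorm_definite (X : Mat N P) : dnorm X = 0 -> forall ij, X ij = 0.
Proof.
  intros H0 [i j].
  destruct (coord_bound N nC HC) as [KC [HKC HbC]].
  destruct (coord_bound P nR HR) as [KR [HKR HbR]].
  apply Rabs_nonpos_eq_0, (le_inv_succ_nonpos _ (KC * KR)). intros n.
  destruct (inf_approx _ _ _ (dnorm_is_inf X) (inv_succ_pos n)) as [t [[M Ht] Hlt]].
  pose proof (prod_cost_entry_bound KC KR HKC HKR HbC HbR M X t Ht i j).
  pose proof (prod_cost_nonneg M X t Ht).
  assert (0 <= KC * KR) by (apply Rmult_le_pos; assumption). nra.
Qed.

Lemma dnorm_is_norm : is_norm dnorm.
Proof.
  split; [exact dnorm_nonneg|]. split; [exact dnorm_definite|].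
  split; [exact dnorm_homog | exact dnorm_triangle].
Qed.

End Decomposition.

Theorem proposition1 (N P : nat) (nC : (Fin N -> R) -> R) (nR : (Fin P -> R) -> R) :
  is_norm nC -> is_norm nR ->
  exists fD : Mat N P -> R,
    (forall X : Mat N P, fD_tends_to N P nC nR X (fD X)) /\ is_norm fD.
Proof.
  intros HC HR. exists (dnorm N P nC nR). split.
  - intros X. exact (dnorm_limit N P nC nR HC HR X).
  - exact (dnorm_is_norm N P nC nR HC HR).
Qed.
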